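(* Let $P=P(G,[\omega])$ be a toric poset over $G=(V,E)$ and $I\subseteq V$. The following are equivalent: (i) $I$ is a toric filter of $P$; (ii) $I$ is an order ideal of $P(G,\omega')$ for some $\omega'\in[\omega]$; (iii) $I$ is an order filter of $P(G,\omega'')$ for some $\omega''\in[\omega]$; (iv) in at least one total toric extension of $P$, the elements of $I$ appear in consecutive cyclic order.
   Context: Toric poset setup: $V=[n]$; $\mathrm{Acyc}(G)$ acyclic orientations; $P(G,\omega)$ the poset given by the transitive closure of $\omega$; $[\omega]$ the class under the equivalence generated by converting a source into a sink; toric chambers (components of $\mathbb{R}^V/\mathbb{Z}^V$ minus the hyperplanes $\{x_i\equiv x_j\bmod1\}$, $\{i,j\}\in E$) correspond bijectively to classes $[\omega]$; $P(G,[\omega])$ is identified with its chamber $c(P)$. For a partition $\pi$, $D^{\mathrm{tor}}_\pi$ is the image in the torus of $\{x\in\mathbb{R}^V: x_i=x_j$ for $i,j$ in a common block$\}$. Toric filter: $I\subseteq V$ is a toric filter of $P$ if $I=\emptyset$, $I=V$, or $\emptyset\ne I\ne V$ and $\overline{c(P)}\cap D^{\mathrm{tor}}_{\{I,V\setminus I\}}$ is two-dimensional (equivalently, the partition $\{I,V\setminus I\}$ is closed w.r.t. $P$, i.e. it is the coarsest partition giving that intersection; this is the preimage structure of a toric morphism onto a two-element toric poset). An order ideal of a poset is a down-closed subset; an order filter an up-closed subset. A total toric extension of $P$ is a chamber $c(P')\subseteq c(P)$ of the toric arrangement of the complete graph $K_V$; these are indexed by cyclic classes $[(w_1,\dots,w_n)]$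 of permutations of $V$ (the set where $0\le x_{w_1}<\dots<x_{w_n}<1$ up to cyclic shift). *)

From Stdlib Require Import Reals Relations.
From mathcomp Require Import all_boot.
Set Implicit Arguments. Unset Strict Implicit. Unset Printing Implicit Defensive.
Local Open Scope R_scope.

(* A simple graph G = (V, E) with V = 'I_n (= [n]), E given by a symmetric
   irreflexive relation e ({i,j} in E <-> e i j). *)
Definition simple_graph n (e : rel 'I_n) : Prop := irreflexive e /\ symmetric e.

Definition orientation n (e o : rel 'I_n) : Prop :=
  (forall i j, o i j -> e i j) /\ (forall i j, e i j -> o i j (+) o j i).

Definition acyclic_orientation n (e o : rel 'I_n) : Prop :=
  orientation e o /\ (forall i j, o i j -> ~~ connect o j i).

(* P(G, o): the poset with i <= j iff connect o i j (reflexive-transitive closure). *)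
Definition order_ideal n (o : rel 'I_n) (I : {set 'I_n}) : Prop :=
  forall i j, connect o i j -> j \in I -> i \in I.
Definition order_filter n (o : rel 'I_n) (I : {set 'I_n}) : Prop :=
  forall i j, connect o i j -> i \in I -> j \in I.

Definition is_source n (e o : rel 'I_n) (i : 'I_n) : Prop := forall j, e i j -> o i j.
Definition flip n (o : rel 'I_n) (i : 'I_n) : rel 'I_n :=
  fun x y => if (x == i) || (y == i) then o y x else o x y.
Definition flip_step n (e : rel 'I_n) (o o' : rel 'I_n) : Prop :=
  (exists i, is_source e o i /\ o' =2 flip o i) \/ o =2 o'.
(* toric_equiv e o o' : o' is in the class [o] (equivalence generated by flips). *)
Definition toric_equiv n (e : rel 'I_n) : relation (rel 'I_n) :=
  clos_refl_sym_trans (rel 'I_n) (flip_step e).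

(* Geometry: points of R^V (the torus R^V/Z^V is handled via Z^V-periodic sets). *)
Definition frac (t : R) : R := (t - IZR (Int_part t)).
Definition is_int (t : R) : Prop := exists z : Z, t = IZR z.

Definition orient_of n (e : rel 'I_n) (x : 'I_n -> R) : rel 'I_n :=
  fun i j => e i j && (if Rlt_dec (frac (x i)) (frac (x j)) then true else false).

(* (Preimage in R^V of) the toric chamber c(P(G,[o])). *)
Definition in_chamber n (e o : rel 'I_n) (x : 'I_n -> R) : Prop :=
  (forall i j, e i j -> ~ is_int (x i - x j)) /\ toric_equiv e (orient_of e x) o.

Definition closure n (S : ('I_n -> R) -> Prop) (x : 'I_n -> R) : Prop :=
  forall eps, (0 < eps) -> exists y, S y /\ forall v, (Rabs (x v - y v) < eps).

(* Toric filter: closure(c(P)) /\ D^tor_{I, V\I} is two-dimensional, i.e. has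
   nonempty interior in the 2-dimensional torus D^tor_{I,V\I}. *)
Definition toric_filter n (e o : rel 'I_n) (I : {set 'I_n}) : Prop :=
  I = set0 \/ I = setT \/
  [/\ I != set0, I != setT &
      exists (k : 'I_n -> Z) (a b eps : R), (0 < eps) /\
        forall a' b' : R, (Rabs (a' - a) < eps) -> (Rabs (b' - b) < eps) ->
          closure (in_chamber e o)
            (fun v => ((if v \in I then a' else b') + IZR (k v)))].

(* Total toric extensions: chambers of the toric arrangement of K_V, indexed by
   cyclic classes of permutations w of V. *)
Definition is_perm_seq n (w : seq 'I_n) : Prop := perm_eq w (enum 'I_n).
Definition increasing_along n (x : 'I_n -> R) (s : seq 'I_n) : Prop :=
  forall a b, a \in s -> b \in s -> (index a s < index b s)%N ->
    (frac (x a) < frac (x b)).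
Definition total_chamber n (w : seq 'I_n) (x : 'I_n -> R) : Prop :=
  exists k, increasing_along x (rot k w).
Definition total_toric_ext n (e o : rel 'I_n) (w : seq 'I_n) : Prop :=
  is_perm_seq w /\ (forall x, total_chamber w x -> in_chamber e o x).
Definition cyc_consecutive n (I : {set 'I_n}) (w : seq 'I_n) : Prop :=
  exists k, [set v in take #|I| (rot k w)] = I.

From Pilot Require Import Defs.
From Stdlib Require Import Reals Relations Lra Lia.
From mathcomp Require Import all_boot.
Set Implicit Arguments. Unset Strict Implicit. Unset Printing Implicit Defensive.

(* The class [o] consists of acyclic orientations: a rank function survives
   every source-to-sink flip.  The orientation induced by a linear order w is
   toric-equivalent to the one induced by any rotation of w, since rotating by
   one step flips the first element from source to sink.  So if I is an ideal
   of some o' in [o], sorting V by a rank of o' shifted so that I comes first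
   yields a total toric extension in which I is an initial, hence cyclically
   consecutive, segment.  Conversely, rotate a total extension until the block I
   comes first; the point with value 1/4 on I and 3/4 elsewhere, perturbed to
   follow the extension, lies in the chamber and its orientation has I as an
   ideal, and letting the two values vary shows that the closure of the chamber
   meets D_{I, V\I} in a two-dimensional set.  Filters are complements of ideals,
   and complements of cyclic blocks are cyclic blocks.  Finally, if the closure
   contains an open piece of D_{I, V\I}, pick a point of it whose two values
   have distinct fractional parts; a chamber point close to it puts all of I
   below, or all of I above, the rest of V, so I is an ideal or a filter of
   its orientation. *)

Section FractionalPart.
Local Open Scope R_scope.

Lemma Int_part_unique (z : Z) (s : R) : IZR z <= s < IZR z + 1 -> Int_part s = z.
Proof.
move=> [lo hi]; have [b1 b2] := base_Int_part s.
have h1 : (z < Int_part s + 1)%Z by apply: lt_IZR; rewrite plus_IZR; lra.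
have h2 : (Int_part s < z + 1)%Z by apply: lt_IZR; rewrite plus_IZR; lra.
lia.
Qed.

Lemma frac_bounds t : 0 <= frac t < 1.
Proof. have [b1 b2] := base_Int_part t; rewrite /frac; lra. Qed.

Lemma frac_of_bounds (z : Z) s : IZR z <= s < IZR z + 1 -> frac s = s - IZR z.
Proof. by move=> hs; rewrite /frac (Int_part_unique hs). Qed.

Lemma frac_id s : 0 <= s < 1 -> frac s = s.
Proof. by move=> hs; rewrite (@frac_of_bounds 0) /=; lra. Qed.

Lemma frac_addr t h : 0 <= frac t + h < 1 -> frac (t + h) = frac t + h.
Proof. by move=> hh; rewrite (@frac_of_bounds (Int_part t)); move: hh; rewrite /frac; lra. Qed.

Lemma frac_addZ t (z : Z) : frac (t + IZR z) = frac t.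
Proof.
have [b1 b2] := frac_bounds t.
by rewrite (@frac_of_bounds (Int_part t + z)) plus_IZR; move: b1 b2; rewrite /frac; lra.
Qed.

Lemma frac_of_int_diff x y : is_int (x - y) -> frac x = frac y.
Proof. by move=> [z hz]; rewrite -(frac_addZ y z); congr frac; lra. Qed.

Lemma frac_near t s g :
  Rabs (t - s) < g -> g <= frac t <= 1 - g -> Rabs (frac s - frac t) < g.
Proof.
move=> /Rabs_def2 [h1 h2] hg.
have st : IZR (Int_part t) <= s < IZR (Int_part t) + 1 by move: hg; rewrite /frac; lra.
by rewrite (frac_of_bounds st); move: hg; rewrite /frac => hg; apply: Rabs_def1; lra.
Qed.

Lemma closure_frac_near n (S : ('I_n -> R) -> Prop) x g : Defs.closure S x -> 0 < g ->
  (forall v, g <= frac (x v) <= 1 - g) ->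
  exists z, S z /\ forall v, Rabs (frac (z v) - frac (x v)) < g.
Proof.
move=> cl g0 hx; have [z [Sz near]] := cl g g0.
by exists z; split=> // v; apply: frac_near; [exact: near | exact: hx].
Qed.

End FractionalPart.

Section Orientations.
Variables (n : nat) (e : rel 'I_n).
Hypothesis sg : simple_graph e.
Implicit Types (o : rel 'I_n) (i : 'I_n).

Lemma toric_equiv_sym o o' : toric_equiv e o o' -> toric_equiv e o' o.
Proof. exact: rst_sym. Qed.

Lemma toric_equiv_trans o1 o2 o3 :
  toric_equiv e o1 o2 -> toric_equiv e o2 o3 -> toric_equiv e o1 o3.
Proof. exact: rst_trans. Qed.

Lemma toric_equiv_eq o o' : o =2 o' -> toric_equiv e o o'.
Proof. by move=> oo'; apply: rst_step; right. Qed.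

(* Acyclicity in the form that is easiest to transport along flips. *)
Definition ranked (o : rel 'I_n) : Prop :=
  orientation e o /\ exists r : 'I_n -> nat, forall a b, o a b -> r a < r b.

Lemma ranked_eq o o' : o =2 o' -> ranked o -> ranked o'.
Proof.
move=> oo' [[sub tot] [r hr]]; split; first split.
- by move=> i j; rewrite -oo'; apply: sub.
- by move=> i j /tot; rewrite !oo'.
by exists r => a b; rewrite -oo'; apply: hr.
Qed.

Lemma acyclic_ranked o : acyclic_orientation e o -> ranked o.
Proof.
move=> [ori acyc]; split=> //.
exists (fun v => #|[set u | connect o u v]|) => a b oab.
apply/proper_card/properP; split.
- by apply/subsetP => u; rewrite !inE => /connect_trans; apply; apply: connect1.
- by exists b; rewrite !inE ?connect0 //; apply: acyc.
Qed.

Lemma orientation_flip o i : orientation e o -> orientation e (flip o i).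
Proof.
have [_ sym] := sg; move=> [sub tot]; split.
- by move=> a b; rewrite /flip; case: ifP => _ /sub //; rewrite sym.
- move=> a b eab; rewrite /flip orbC; case: ifP => _; last exact: tot.
  by rewrite addbC tot // sym.
Qed.

Lemma ranked_flip_source o i : is_source e o i -> ranked o -> ranked (flip o i).
Proof.
have [_ sym] := sg; move=> src [ori [r hr]]; split; first exact: orientation_flip.
exists (fun v => if v == i then (\max_u r u).+1 else r v) => a b.
rewrite /flip; case: (eqVneq a i) => [->|ai] /=.
  move=> obi; have eib : e i b by rewrite sym; apply: ori.1.
  by have := ori.2 _ _ eib; rewrite obi (src _ eib).
case: (eqVneq b i) => [_ _|_]; [by rewrite ltnS leq_bigmax | exact: hr].
Qed.

Lemma ranked_flip_sink o i : (forall j, ~~ o i j) -> ranked o -> ranked (flip o i).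
Proof.
move=> snk [ori [r hr]]; split; first exact: orientation_flip.
exists (fun v => if v == i then 0 else (r v).+1) => a b.
rewrite /flip; case: (eqVneq a i) => [->|ai]; case: (eqVneq b i) => [->|bi] //=.
- by rewrite (negPf (snk i)).
- by move=> oba; move: (snk a); rewrite oba.
- by move/hr.
Qed.

Lemma flipK o i : flip (flip o i) i =2 o.
Proof. by move=> a b; rewrite /flip; case: (a == i); case: (b == i). Qed.

Lemma ranked_flip_step o o' : flip_step e o o' -> ranked o <-> ranked o'.
Proof.
case=> [[i [src o'E]]|oo']; last by split; apply: ranked_eq.
have flipE : flip o i =2 o' by move=> a b; rewrite o'E.
split=> [ro|ro']; first exact/(ranked_eq flipE)/ranked_flip_source.
have snk : forall j, ~~ o' i j.
  move=> j; case: (boolP (e i j)) => eij.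
    by have := ro'.1.2 _ _ eij; rewrite (o'E j i) /flip eqxx orbT (src _ eij) addbT.
  by apply/negP => /ro'.1.1; rewrite (negPf eij).
apply: ranked_eq (ranked_flip_sink snk ro') => a b.
by rewrite -(flipK o i a b) /flip !o'E.
Qed.

Lemma ranked_toric_equiv o o' : toric_equiv e o o' -> ranked o <-> ranked o'.
Proof. by elim=> [a b /ranked_flip_step|a|a b _|a b c _ IH1 _ IH2] //; tauto. Qed.

End Orientations.

Section LinearOrders.
Variables (n : nat) (e : rel 'I_n).
Hypothesis sg : simple_graph e.
Implicit Types (o : rel 'I_n) (s w : seq 'I_n).

Definition lin_orient s : rel 'I_n := fun i j => e i j && (index i s < index j s).

Lemma toric_equiv_lin_orient_rot1 s : perm_eq s (enum 'I_n) ->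
  toric_equiv e (lin_orient s) (lin_orient (rot 1 s)).
Proof.
have [irr sym] := sg.
case: s => [|v s] ps; first exact: rst_refl.
have vNs : v \notin s by have := perm_uniq ps; rewrite enum_uniq => /andP [].
have in_s x : x != v -> x \in s.
  by move=> xv; have := perm_mem ps x; rewrite mem_enum inE (negPf xv).
rewrite rot1_cons; apply: rst_step; left; exists v; split.
  move=> j evj; rewrite /lin_orient evj /= eqxx; case: eqVneq evj => // <-.
  by rewrite irr.
move=> a b; rewrite /lin_orient /flip -!cats1 !index_cat /=.
case: (eqVneq a v) => [->|av]; case: (eqVneq b v) => [->|bv] /=.
- by rewrite irr.
- rewrite (negPf vNs) (in_s _ bv) sym addn0; case: (e b v) => //=.
  by rewrite ltnNge ltnW // index_mem in_s.
- by rewrite (negPf vNs) (in_s _ av) sym addn0 index_mem in_s.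
- by rewrite (in_s _ av) (in_s _ bv).
Qed.

Lemma toric_equiv_lin_orient_rot s k : perm_eq s (enum 'I_n) ->
  toric_equiv e (lin_orient s) (lin_orient (rot k s)).
Proof.
move=> ps; elim: k => [|k IH]; first by rewrite rot0; apply: rst_refl.
have [ks|sk] := ltnP k (size s); last by rewrite !rot_oversize ?leqW //; apply: rst_refl.
rewrite rotS //; apply: toric_equiv_trans IH _; apply: toric_equiv_lin_orient_rot1.
by rewrite perm_rot.
Qed.

Lemma orient_of_increasing (x : 'I_n -> R) s : perm_eq s (enum 'I_n) ->
  increasing_along x s ->
  (forall i j, e i j -> ~ is_int (x i - x j)) /\ orient_of e x =2 lin_orient s.
Proof.
have [irr _] := sg; move=> ps inc.
have in_s i : i \in s by rewrite (perm_mem ps) mem_enum.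
have cmp i j : e i j ->
  Rlt (frac (x i)) (frac (x j)) /\ index i s < index j s \/
  Rlt (frac (x j)) (frac (x i)) /\ index j s < index i s.
  move=> eij; have : index i s != index j s.
    rewrite (inj_in_eq (index_inj i (s := s))) ?in_s //.
    by case: eqVneq eij => // ->; rewrite irr.
  by case: ltngtP => // lt _; [left|right]; split=> //; apply: inc.
split=> [i j eij /frac_of_int_diff fE | i j].
  by case: (cmp _ _ eij) => -[lt _]; rewrite fE in lt; apply: (Rlt_irrefl _ lt).
rewrite /orient_of /lin_orient; case eij: (e i j) => //=.
case: (Rlt_dec (frac (x i)) (frac (x j))) => lt; case: (cmp _ _ eij) => -[lt' ij].
- by rewrite ij.
- by case: (Rlt_asym _ _ lt lt').
- by case: (lt lt').
- by rewrite ltnNge ltnW.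
Qed.

Lemma total_toric_ext_lin_orient o w : perm_eq w (enum 'I_n) ->
  toric_equiv e (lin_orient w) o -> total_toric_ext e o w.
Proof.
move=> pw wo; split=> // x [k inc].
have pkw : perm_eq (rot k w) (enum 'I_n) by rewrite perm_rot.
have [noint xE] := orient_of_increasing pkw inc.
split=> //; apply: toric_equiv_trans (toric_equiv_eq e xE) _.
exact: toric_equiv_trans (toric_equiv_sym (toric_equiv_lin_orient_rot k pw)) wo.
Qed.

End LinearOrders.

Section ConsecutiveExtensions.
Variables (n : nat) (e : rel 'I_n).
Hypothesis sg : simple_graph e.
Implicit Types (o : rel 'I_n) (I J : {set 'I_n}) (p q w : seq 'I_n).

Definition rank_sort (k : 'I_n -> nat) : seq 'I_n :=
  sort (fun x y => k x <= k y) (enum 'I_n).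

Lemma perm_rank_sort k : perm_eq (rank_sort k) (enum 'I_n).
Proof. by rewrite perm_sort perm_refl. Qed.

Lemma index_rank_sort_lt k a b :
  k a < k b -> index a (rank_sort k) < index b (rank_sort k).
Proof.
set w := rank_sort k => kab; have in_w x : x \in w by rewrite mem_sort mem_enum.
have sw : sorted (fun x y => k x <= k y) w by apply: sort_sorted => x y; apply: leq_total.
rewrite ltnNge; apply/negP => ba.
have := sorted_leq_index (fun y x z => @leq_trans (k y) (k x) (k z)) (fun x => leqnn (k x))
  sw b a (in_w b) (in_w a) ba.
by rewrite leqNgt kab.
Qed.

Lemma lin_orient_rank_sort o k : orientation e o ->
  (forall a b, o a b -> k a < k b) -> o =2 lin_orient e (rank_sort k).
Proof.
move=> [sub tot] hk a b; rewrite /lin_orient.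
case eab: (e a b); last by apply/negP => /sub; rewrite eab.
have := tot _ _ eab; case oab: (o a b) => /= oba.
  by rewrite index_rank_sort_lt // hk.
by apply/esym/negbTE; rewrite -leqNgt ltnW // index_rank_sort_lt // hk.
Qed.

Lemma sorted_filter_cat (T : eqType) (J : pred T) (s : seq T) :
  sorted (fun a b => J b ==> J a) s -> s = [seq x <- s | J x] ++ [seq x <- s | ~~ J x].
Proof.
have tr : transitive (fun a b => J b ==> J a).
  by move=> y x z; case: (J x); case: (J y); case: (J z).
elim: s => [//|a s IH] sas /=; have ss := path_sorted sas.
case: (boolP (J a)) => Ja /=; first by rewrite {1}(IH ss).
have sJ : all (fun x => ~~ J x) s.
  by apply: sub_all (order_path_min tr sas) => b /=; rewrite (negPf Ja) implybF.
rewrite (all_filterP sJ) (@eq_in_filter _ J pred0) ?filter_pred0 //.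
by move=> b /(allP sJ) /negPf.
Qed.

Lemma cyc_consecutive_rot I w k p q :
  uniq w -> rot k w = p ++ q -> [set v in p] = I -> cyc_consecutive I w.
Proof.
move=> uw wE pI; have : uniq (p ++ q) by rewrite -wE rot_uniq.
rewrite cat_uniq => /and3P [up _ _].
by exists k; rewrite wE -pI cardsE (card_uniqP up) take_size_cat.
Qed.

Lemma ideal_cyc_consecutive o o' J : acyclic_orientation e o ->
  toric_equiv e o o' -> order_ideal o' J ->
  exists w, total_toric_ext e o w /\ cyc_consecutive J w.
Proof.
move=> ac oo' idJ.
have [ori [r hr]] : ranked e o' by apply/(ranked_toric_equiv sg oo').1/acyclic_ranked.
pose M := (\max_u r u).+1; have rM v : r v < M by rewrite ltnS leq_bigmax.
(* Shifting the ranks outside J by M puts J first without breaking monotonicity. *)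
pose k v := r v + (v \notin J) * M.
have hk a b : o' a b -> k a < k b.
  move=> oab; rewrite /k; case: (boolP (b \in J)) => bJ.
    by rewrite (idJ _ _ (connect1 oab) bJ) /= mul0n !addn0 hr.
  case: (a \in J) => /=; rewrite ?mul0n ?mul1n ?addn0; last by rewrite ltn_add2r hr.
  by rewrite (leq_trans (rM a)) // leq_addl.
set w := rank_sort k; have wE := lin_orient_rank_sort ori hk.
have uw : uniq w by rewrite sort_uniq enum_uniq.
exists w; split.
  apply: (total_toric_ext_lin_orient sg (perm_rank_sort k)).
  exact: toric_equiv_sym (toric_equiv_trans oo' (toric_equiv_eq e wE)).
apply: (@cyc_consecutive_rot _ _ 0 [seq v <- w | v \in J] [seq v <- w | v \notin J]) => //.
  rewrite rot0; apply: (sorted_filter_cat (J := fun v => v \in J)).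
  apply: sub_sorted (sort_sorted _ _) => [a b|x y].
    apply: contraLR; rewrite negb_imply => /andP [bJ /negPf aJ].
    by rewrite -ltnNge /k bJ aJ /= mul0n mul1n addn0 (leq_trans (rM b)) // leq_addl.
  exact: leq_total.
by apply/setP => v; rewrite inE mem_filter mem_sort mem_enum andbT.
Qed.

Lemma order_ideal_compl o I : order_ideal o (~: I) <-> order_filter o I.
Proof.
split=> id i j ij.
- by apply: contraLR; rewrite -!in_setC; apply: id.
- by rewrite !in_setC; apply: contra; apply: id.
Qed.

Lemma cyc_consecutive_split I w : cyc_consecutive I w ->
  exists k p q, rot k w = p ++ q /\ [set v in p] = I.
Proof.
case=> k pI; exists k, (take #|I| (rot k w)), (drop #|I| (rot k w)).
by rewrite cat_take_drop.
Qed.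

Lemma cyc_consecutive_compl I w :
  is_perm_seq w -> cyc_consecutive I w -> cyc_consecutive (~: I) w.
Proof.
move=> pw /cyc_consecutive_split [k [p [q [wE pI]]]].
have uw : uniq w by rewrite (perm_uniq pw) enum_uniq.
have : uniq (p ++ q) by rewrite -wE rot_uniq.
rewrite cat_uniq => /and3P [_ disj _].
apply: (@cyc_consecutive_rot _ _ (rot_add w k (size p)) q p) => //.
  by rewrite -rot_rot_add wE rot_size_cat.
apply/setP => v; rewrite -pI !inE.
have : v \in p ++ q by rewrite -wE mem_rot (perm_mem pw) mem_enum.
rewrite mem_cat; case: (boolP (v \in p)) => //= vp _.
by apply/negP => vq; move/hasPn: disj => /(_ v vq); rewrite vp.
Qed.

End ConsecutiveExtensions.

Section ToricFilters.
Local Open Scope R_scope.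
Variables (n : nat) (e : rel 'I_n).
Implicit Types (o : rel 'I_n) (I : {set 'I_n}) (p q s w : seq 'I_n).

Lemma order_ideal_connect o I :
  (forall u v, o u v -> v \in I -> u \in I) -> order_ideal o I.
Proof.
move=> step i j /connectP [pth opth ->]; elim: pth i opth => [|x pth IH] i //=.
by move=> /andP [oix opth] /(IH _ opth); apply: step.
Qed.

Lemma orient_of_ideal (x : 'I_n -> R) I :
  (forall u v, u \in I -> v \notin I -> frac (x u) < frac (x v)) ->
  order_ideal (orient_of e x) I.
Proof.
move=> sep; apply: order_ideal_connect => u v /andP [_].
case: Rlt_dec => // lt _ vI; apply/negPn/negP => uI.
exact: Rlt_asym lt (sep _ _ vI uI).
Qed.

(* The perturbation, smaller than m, makes the coordinates increase along s
   within each of the two levels. *)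
Definition two_level_point p s (a b m : R) (v : 'I_n) : R :=
  (if v \in p then a else b) + m / INR (size s).+1 * INR (index v s).

Lemma two_level_point_offset p s a b m v : 0 < m ->
  0 <= two_level_point p s a b m v - (if v \in p then a else b) < m.
Proof.
move=> m0; rewrite /two_level_point; set N := INR (size s).+1.
suff : 0 <= m / N * INR (index v s) < m by lra.
have N0 : 0 < N by apply: lt_0_INR; apply/ltP.
have iN : INR (index v s) < N by apply: lt_INR; apply/ltP; rewrite ltnS index_size.
have := pos_INR (index v s); have d0 : 0 < m / N by apply: Rdiv_lt_0_compat.
split; first by apply: Rmult_le_pos; lra.
apply: (Rlt_le_trans _ (m / N * N)); first by apply: Rmult_lt_compat_l.
by right; field; lra.
Qed.

Lemma two_level_point_lt p s a b m u v : 0 < m -> a + m <= b ->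
  u \in p -> v \notin p -> two_level_point p s a b m u < two_level_point p s a b m v.
Proof.
move=> m0 amb up vp.
have := @two_level_point_offset p s a b m u m0.
have := @two_level_point_offset p s a b m v m0.
by rewrite up (negPf vp); lra.
Qed.

Lemma frac_two_level_point p s a b m v : 0 < m -> 0 <= a <= b -> b + m <= 1 ->
  frac (two_level_point p s a b m v) = two_level_point p s a b m v.
Proof.
move=> m0 ab bm; apply: frac_id.
by have := @two_level_point_offset p s a b m v m0; case: (v \in p); lra.
Qed.

Lemma two_level_point_increasing p q a b m : 0 < m -> 0 <= a -> a + m <= b ->
  b + m <= 1 -> increasing_along (two_level_point p (p ++ q) a b m) (p ++ q).
Proof.
move=> m0 a0 amb bm u v _ _ uv.
rewrite !frac_two_level_point //; try lra.
set N := INR (size (p ++ q)).+1.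
have offset_lt : m / N * INR (index u (p ++ q)) < m / N * INR (index v (p ++ q)).
  apply: Rmult_lt_compat_l; last exact/lt_INR/ltP.
  by apply: Rdiv_lt_0_compat => //; apply: lt_0_INR; apply/ltP.
case: (boolP (u \in p)) => up; case: (boolP (v \in p)) => vp.
- by rewrite /two_level_point -/N up vp; lra.
- exact: two_level_point_lt.
- move: uv; rewrite !index_cat (negPf up) vp ltnNge.
  by rewrite (leq_trans (ltnW _) (leq_addr _ _)) // index_mem.
- by rewrite /two_level_point -/N (negPf up) (negPf vp); lra.
Qed.

Lemma in_chamber_two_level_point o w k p q a b m :
  total_toric_ext e o w -> rot k w = p ++ q ->
  0 < m -> 0 <= a -> a + m <= b -> b + m <= 1 ->
  in_chamber e o (two_level_point p (p ++ q) a b m).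
Proof.
move=> [_ chamber] wE m0 a0 amb bm; apply: chamber; exists k.
by rewrite wE; apply: two_level_point_increasing.
Qed.

Lemma cyc_consecutive_ideal o w I : total_toric_ext e o w -> cyc_consecutive I w ->
  exists o', toric_equiv e o o' /\ order_ideal o' I.
Proof.
move=> tt /cyc_consecutive_split [k [p [q [wE pI]]]].
set x := two_level_point p (p ++ q) (1/4) (3/4) (1/8).
have [_ xo] : in_chamber e o x by apply: in_chamber_two_level_point tt wE _ _ _ _; lra.
exists (orient_of e x); split; first exact: toric_equiv_sym.
rewrite -pI; apply: orient_of_ideal => u v; rewrite !inE => up vp.
rewrite !frac_two_level_point; try lra.
by apply: two_level_point_lt => //; lra.
Qed.

Lemma cyc_consecutive_toric_filter o w I : total_toric_ext e o w ->
  cyc_consecutive I w -> toric_filter e o I.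
Proof.
move=> tt cc; have [k [p [q [wE pI]]]] := cyc_consecutive_split cc.
have [->|I0] := eqVneq I set0; first by left.
have [->|IT] := eqVneq I setT; first by right; left.
right; right; split=> //; exists (fun=> 0%Z), (1/4), (3/4), (1/8); split; first lra.
move=> a b /Rabs_def2 [ha1 ha2] /Rabs_def2 [hb1 hb2] eps eps0.
have := Rmin_l eps (1/8); have := Rmin_r eps (1/8); set m := Rmin eps (1/8) => m8 meps.
have m0 : 0 < m by apply: Rmin_glb_lt; lra.
exists (two_level_point p (p ++ q) a b m); split.
  by apply: in_chamber_two_level_point tt wE _ _ _ _; lra.
move=> v; have := @two_level_point_offset p (p ++ q) a b m v m0.
by rewrite -pI inE /=; case: (v \in p) => off; apply: Rabs_def1; lra.
Qed.

Lemma exists_separated_levels a b eps : 0 < eps ->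
  exists a' b' g, Rabs (a' - a) < eps /\ Rabs (b' - b) < eps /\
    [/\ 0 < g, g <= frac a' <= 1 - g, g <= frac b' <= 1 - g &
         frac a' + 2 * g <= frac b' \/ frac b' + 2 * g <= frac a'].
Proof.
move=> eps0; have [fa0 fa1] := frac_bounds a; have [fb0 fb1] := frac_bounds b.
pose d := Rmin eps (Rmin (1 - frac a) (1 - frac b)).
have d0 : 0 < d by apply: Rmin_glb_lt => //; apply: Rmin_glb_lt; lra.
have [deps da db] : [/\ d <= eps, d <= 1 - frac a & d <= 1 - frac b].
  split; first exact: Rmin_l.
    exact: Rle_trans (Rmin_r _ _) (Rmin_l _ _).
  exact: Rle_trans (Rmin_r _ _) (Rmin_r _ _).
have [t [td fab]] : exists t, d / 4 <= t <= d / 2 /\ frac a + d / 2 <> frac b + t.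
  by case: (Req_dec (frac a) (frac b)) => h; [exists (d / 4) | exists (d / 2)];
    split=> [|fE]; lra.
have fa' : frac (a + d / 2) = frac a + d / 2 by apply: frac_addr; lra.
have fb' : frac (b + t) = frac b + t by apply: frac_addr; lra.
pose g := Rmin (d / 8) (Rabs (frac a + d / 2 - (frac b + t)) / 2).
have gab : 0 < Rabs (frac a + d / 2 - (frac b + t)) by apply: Rabs_pos_lt; lra.
have g0 : 0 < g by apply: Rmin_glb_lt; lra.
have g8 : g <= d / 8 := Rmin_l _ _.
have g2 : 2 * g <= Rabs (frac a + d / 2 - (frac b + t)).
  by have := Rmin_r (d / 8) (Rabs (frac a + d / 2 - (frac b + t)) / 2); rewrite -/g; lra.
exists (a + d / 2), (b + t), g; rewrite fa' fb'.
split; first by apply: Rabs_def1; lra.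
split; first by apply: Rabs_def1; lra.
split; try lra.
by move: g2; case: (Rcase_abs (frac a + d / 2 - (frac b + t))) => s;
    [rewrite Rabs_left // | rewrite Rabs_right //]; lra.
Qed.

Lemma toric_filter_ideal_or_filter o I : toric_filter e o I ->
  (exists o', toric_equiv e o o' /\ order_ideal o' I) \/
  (exists o', toric_equiv e o o' /\ order_filter o' I).
Proof.
have trivial_ideal J : J = set0 \/ J = setT ->
    exists o', toric_equiv e o o' /\ order_ideal o' J.
  move=> J0T; exists o; split; first exact: rst_refl.
  by case: J0T => -> i j _; rewrite inE.
case=> [I0|[IT|[_ _ [k [a [b [eps [eps0 cl]]]]]]]]; try by left; apply: trivial_ideal; tauto.
have [a' [b' [g [ha [hb [g0 ga gb sep]]]]]] := exists_separated_levels a b eps0.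
set x := fun v => (if v \in I then a' else b') + IZR (k v).
have fx v : frac (x v) = if v \in I then frac a' else frac b'.
  by rewrite /x frac_addZ; case: (v \in I).
have [z [[_ zo] near]] : exists z, in_chamber e o z /\
    forall v, Rabs (frac (z v) - frac (x v)) < g.
  by apply: closure_frac_near (cl a' b' ha hb) g0 _ => v; rewrite fx; case: ifP.
have [uI vI] : (forall u, u \in I -> Rabs (frac (z u) - frac a') < g) /\
               (forall v, v \notin I -> Rabs (frac (z v) - frac b') < g).
  by split=> v vI; have := near v; rewrite fx; [rewrite vI | rewrite (negPf vI)].
case: sep => sep; [left | right]; exists (orient_of e z); split;
  try exact: toric_equiv_sym.
- apply: orient_of_ideal => u v /uI /Rabs_def2 ? /vI /Rabs_def2 ?; lra.
- apply/order_ideal_compl/orient_of_ideal => u v; rewrite !inE negbK.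
  move=> /vI /Rabs_def2 ? /uI /Rabs_def2 ?; lra.
Qed.

End ToricFilters.

Theorem mainTheorem12 (n : nat) (e o : rel 'I_n) (I : {set 'I_n}) :
  simple_graph e -> acyclic_orientation e o ->
  [/\ (toric_filter e o I <-> exists o', toric_equiv e o o' /\ order_ideal o' I),
      (toric_filter e o I <-> exists o'', toric_equiv e o o'' /\ order_filter o'' I) &
      (toric_filter e o I <-> exists w, total_toric_ext e o w /\ cyc_consecutive I w)].
Proof.
move=> sg ac.
have ii_iv J : (exists o', toric_equiv e o o' /\ order_ideal o' J) <->
    (exists w, total_toric_ext e o w /\ cyc_consecutive J w).
  split=> [[o' [oo' idJ]] | [w [tt cc]]]; first exact: ideal_cyc_consecutive ac oo' idJ.
  exact: cyc_consecutive_ideal tt cc.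
have iii_ii : (exists o'', toric_equiv e o o'' /\ order_filter o'' I) <->
    (exists o', toric_equiv e o o' /\ order_ideal o' (~: I)).
  by split=> -[o' [oo' h]]; exists o'; split=> //; apply/order_ideal_compl.
have iv_compl : (exists w, total_toric_ext e o w /\ cyc_consecutive I w) <->
    (exists w, total_toric_ext e o w /\ cyc_consecutive (~: I) w).
  split=> -[w [tt cc]]; exists w; split=> //; first exact: cyc_consecutive_compl tt.1 cc.
  by rewrite -(setCK I); apply: cyc_consecutive_compl tt.1 cc.
have iv_i : (exists w, total_toric_ext e o w /\ cyc_consecutive I w) -> toric_filter e o I.
  by case=> w [tt cc]; apply: cyc_consecutive_toric_filter tt cc.
have i_iv : toric_filter e o I -> exists w, total_toric_ext e o w /\ cyc_consecutive I w.
  by case/toric_filter_ideal_or_filter => [/ii_iv // | /iii_ii/ii_iv/iv_compl].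
split; [rewrite ii_iv | rewrite iii_ii ii_iv -iv_compl |]; split=> [/i_iv | /iv_i] //.
Qed.
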